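(* Let $X$ be a uniformly convex and uniformly smooth Banach space and let $(g_k)$ be bijective linear isometries of $X$ such that $(g_k^{-1})$ converges strongly (pointwise in norm). If $x_k\rightharpoondown0$, then $g_kx_k\rightharpoondown0$.
   Context: $x_k\rightharpoondown x$ (Δ-convergence) means: for every $y\in X$, $\limsup_{k\to\infty}(\|x_k-x\|-\|x_k-y\|)\le0$. *)

From Stdlib Require Import Reals Lra.
Open Scope R_scope.

Record NormedSpace := {
  carrier :> Type;
  vzero : carrier;
  vadd : carrier -> carrier -> carrier;
  vopp : carrier -> carrier;
  vscal : R -> carrier -> carrier;
  vnorm : carrier -> R;
  vadd_assoc : forall x y z, vadd x (vadd y z) = vadd (vadd x y) z;
  vadd_comm : forall x y, vadd x y = vadd y x;
  vadd_0 : forall x, vadd x vzero = x;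
  vadd_opp : forall x, vadd x (vopp x) = vzero;
  vscal_1 : forall x, vscal 1 x = x;
  vscal_assoc : forall a b x, vscal a (vscal b x) = vscal (a * b) x;
  vscal_distr_v : forall a x y, vscal a (vadd x y) = vadd (vscal a x) (vscal a y);
  vscal_distr_s : forall a b x, vscal (a + b) x = vadd (vscal a x) (vscal b x);
  vnorm_eq0 : forall x, vnorm x = 0 -> x = vzero;
  vnorm_scal : forall a x, vnorm (vscal a x) = Rabs a * vnorm x;
  vnorm_triangle : forall x y, vnorm (vadd x y) <= vnorm x + vnorm y
}.

Arguments vzero {n}.
Arguments vadd {n}.
Arguments vopp {n}.
Arguments vscal {n}.
Arguments vnorm {n}.

Definition vsub {X : NormedSpace} (x y : X) : X := vadd x (vopp y).

Definition seq_conv {X : NormedSpace} (u : nat -> X) (l : X) : Prop :=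
  forall eps, eps > 0 -> exists N, forall k, (k >= N)%nat -> vnorm (vsub (u k) l) < eps.

Definition cauchy_seq {X : NormedSpace} (u : nat -> X) : Prop :=
  forall eps, eps > 0 -> exists N, forall m n, (m >= N)%nat -> (n >= N)%nat ->
    vnorm (vsub (u m) (u n)) < eps.

Definition complete (X : NormedSpace) : Prop :=
  forall u : nat -> X, cauchy_seq u -> exists l, seq_conv u l.

Definition uniformly_convex (X : NormedSpace) : Prop :=
  forall eps, 0 < eps <= 2 -> exists delta, delta > 0 /\
    forall x y : X, vnorm x <= 1 -> vnorm y <= 1 -> vnorm (vsub x y) >= eps ->
      vnorm (vscal (/2) (vadd x y)) <= 1 - delta.

(* Uniform smoothness: rho(tau)/tau -> 0 as tau -> 0+, where
   rho(tau) = sup { (||x + tau y|| + ||x - tau y||)/2 - 1 : ||x|| = ||y|| = 1 }. *)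
Definition uniformly_smooth (X : NormedSpace) : Prop :=
  forall eps, eps > 0 -> exists delta, delta > 0 /\
    forall tau, 0 < tau < delta ->
      forall x y : X, vnorm x = 1 -> vnorm y = 1 ->
        (vnorm (vadd x (vscal tau y)) + vnorm (vsub x (vscal tau y))) / 2 - 1 <= eps * tau.

Definition is_linear {X : NormedSpace} (g : X -> X) : Prop :=
  (forall x y, g (vadd x y) = vadd (g x) (g y)) /\
  (forall a x, g (vscal a x) = vscal a (g x)).

Definition is_isometry {X : NormedSpace} (g : X -> X) : Prop :=
  forall x, vnorm (g x) = vnorm x.

Definition limsup_le0 (a : nat -> R) : Prop :=
  forall eps, eps > 0 -> exists N, forall k, (k >= N)%nat -> a k <= eps.

(* Delta-convergence: x_k ⇀ x iff for all y, limsup (||x_k - x|| - ||x_k - y||) <= 0. *)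
Definition delta_conv {X : NormedSpace} (u : nat -> X) (x : X) : Prop :=
  forall y : X, limsup_le0 (fun k => vnorm (vsub (u k) x) - vnorm (vsub (u k) y)).

(* Since g_k is a linear isometry, ||g_k x_k - y|| = ||x_k - g_k^{-1} y||, so
   it suffices that Delta-convergence x_k ⇀ 0 survives replacing the fixed
   competitor l by a sequence w_k = g_k^{-1} y converging to l in norm; this
   follows from | ||x_k - w_k|| - ||x_k - l|| | <= ||w_k - l||. *)

From Stdlib Require Import Reals Lra Lia.
Open Scope R_scope.

Section VectorAlgebra.
Variable X : NormedSpace.

Lemma vadd_cancel_r (x y z : X) : vadd x z = vadd y z -> x = y.
Proof.
  intro H.
  rewrite <- (vadd_0 X x), <- (vadd_0 X y), <- (vadd_opp X z).
  now rewrite !vadd_assoc, H.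
Qed.

Lemma vscal_0 (x : X) : vscal 0 x = vzero.
Proof.
  apply (vadd_cancel_r _ _ (vscal 0 x)).
  now rewrite <- vscal_distr_s, Rplus_0_l, vadd_comm, vadd_0.
Qed.

Lemma vopp_scal (x : X) : vopp x = vscal (-1) x.
Proof.
  apply (vadd_cancel_r _ _ x).
  rewrite vadd_comm, vadd_opp.
  rewrite <- (vscal_1 X x) at 2.
  rewrite <- vscal_distr_s. replace (-1 + 1) with 0 by ring.
  now rewrite vscal_0.
Qed.

Lemma vopp_0 : vopp (@vzero X) = vzero.
Proof. now rewrite <- (vadd_opp X vzero) at 2; rewrite vadd_comm, vadd_0. Qed.

Lemma vsub_0 (x : X) : vsub x vzero = x.
Proof. now unfold vsub; rewrite vopp_0, vadd_0. Qed.

Lemma vsub_add_vsub (x y z : X) : vadd (vsub x y) (vsub y z) = vsub x z.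
Proof.
  unfold vsub.
  rewrite <- vadd_assoc. f_equal.
  rewrite (vadd_assoc X (vopp y) y), (vadd_comm X (vopp y) y), vadd_opp.
  now rewrite (vadd_comm X vzero), vadd_0.
Qed.

Lemma linear_vsub (g : X -> X) (x y : X) :
  is_linear g -> g (vsub x y) = vsub (g x) (g y).
Proof.
  intros [Hadd Hscal]. unfold vsub.
  now rewrite Hadd, !vopp_scal, Hscal.
Qed.

Lemma isometry_vsub_inv (g ginv : X -> X) (x y : X) :
  is_linear g -> is_isometry g -> (forall z, g (ginv z) = z) ->
  vnorm (vsub (g x) y) = vnorm (vsub x (ginv y)).
Proof.
  intros Hlin Hiso Hinv.
  now rewrite <- (Hiso (vsub x (ginv y))), linear_vsub, Hinv.
Qed.

End VectorAlgebra.

Lemma delta_conv_moving_competitor {X : NormedSpace} (u w : nat -> X) (x l : X) :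
  delta_conv u x -> seq_conv w l ->
  limsup_le0 (fun k => vnorm (vsub (u k) x) - vnorm (vsub (u k) (w k))).
Proof.
  intros Hu Hw eps Heps.
  destruct (Hu l (eps / 2)) as [N1 HN1]; [lra|].
  destruct (Hw (eps / 2)) as [N2 HN2]; [lra|].
  exists (max N1 N2). intros k Hk.
  specialize (HN1 k ltac:(lia)). specialize (HN2 k ltac:(lia)). simpl in HN1.
  pose proof (vnorm_triangle X (vsub (u k) (w k)) (vsub (w k) l)) as Htri.
  rewrite vsub_add_vsub in Htri.
  lra.
Qed.

Theorem lemma5p7 (X : NormedSpace)
  (HX : complete X) (Hconv : uniformly_convex X) (Hsmooth : uniformly_smooth X)
  (g ginv : nat -> X -> X)
  (Hlin : forall k, is_linear (g k))
  (Hiso : forall k, is_isometry (g k))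
  (Hinv1 : forall k x, ginv k (g k x) = x)
  (Hinv2 : forall k x, g k (ginv k x) = x)
  (Hstrong : forall x : X, exists l : X, seq_conv (fun k => ginv k x) l)
  (u : nat -> X) :
  delta_conv u vzero -> delta_conv (fun k => g k (u k)) vzero.
Proof.
  intros Hu y eps Heps.
  destruct (Hstrong y) as [l Hl].
  destruct (delta_conv_moving_competitor _ _ _ _ Hu Hl eps Heps) as [N HN].
  exists N. intros k Hk. simpl.
  rewrite vsub_0, Hiso, (isometry_vsub_inv _ _ _ _ _ (Hlin k) (Hiso k) (Hinv2 k)).
  specialize (HN k Hk). now rewrite vsub_0 in HN.
Qed.
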